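(* Let $\Pi\subset\mathbb R^2$ be a convex polygon with vertex set $V=\{\mathbf v_1,\dots,\mathbf v_n\}$ ($n\ge3$, listed counterclockwise, all extreme points), and let $\delta$ be a chordal decomposition of $\Pi$ with triangle set $T_\delta$. Then for every $a\in\Pi$: (a) $\sum_{v\in V}\langle a|v\rangle_\delta=1$; (b) $a=\sum_{v\in V}\langle a|v\rangle_\delta\, v$.
   Context: A chord is a segment joining two vertices of $\Pi$ that are not adjacent on the boundary. A chordal decomposition $\delta$ is a set of $n-3$ pairwise non-crossing chords; they decompose $\Pi$ as a union of $n-2$ closed triangles (regions) whose vertices are vertices of $\Pi$; $T_\delta$ is the set of these triangles. For a triangle $\tau$ with vertices $u_0,u_1,u_2$ in counterclockwise order (indices mod 3), the areal coordinate function is $\langle x|u_i\rangle_\tau=A(u_{i-1},x,u_{i+1})/A(u_0,u_1,u_2)$ for $x\in\Pi$, where $A(\mathbf p,\mathbf q,\mathbf r)=\tfrac12\det[\mathbf q-\mathbf p,\mathbf r-\mathbf p]$. For a subset $X\subseteq\Pi$, $\mathds 1_X$ is its indicator function. Chordal coordinate function: for a vertex $v$, let $\tau_1,\dots,\tau_r$ be an enumeration of the triangles of $T_\delta$ containing $v$; set $F_0=0$ and $F_k=F_{k-1}+\mathds 1_{\tau_k}\cdot\langle\cdot|v\rangle_{\tau_k}-\mathds 1_{\tau_k\cap(\tau_1\cup\dots\cup\tau_{k-1})}\cdot\langle\cdot|v\rangle_{\tau_k}$ (pointwise operations on functions $\Pi\to\mathbb R$); then $\langle a|v\rangle_\delta=F_r(a)$.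 *)

From HB Require Import structures.
From mathcomp Require Import all_boot all_order all_algebra.
From mathcomp Require Import boolp.
Set Implicit Arguments. Unset Strict Implicit. Unset Printing Implicit Defensive.
Import Order.TTheory GRing.Theory Num.Theory.
Local Open Scope ring_scope.

Section Defs.
Variable R : realFieldType.
Notation pt := 'rV[R]_2.

Definition area (p q r : pt) : R := 2^-1 * \det (col_mx (q - p) (r - p) : 'M_2).

Definition conv_hull (m : nat) (u : 'I_m -> pt) : pt -> Prop :=
  fun x => exists l : 'I_m -> R,
    (forall i, 0 <= l i) /\ \sum_i l i = 1 /\ x = \sum_i l i *: u i.

Definition segment (p q : pt) : pt -> Prop :=
  fun x => exists t : R, 0 <= t <= 1 /\ x = (1 - t) *: p + t *: q.

Variable n : nat.
Variable v : 'I_n -> pt.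

(* v_0,...,v_{n-1} are the vertices of a convex polygon, listed counterclockwise,
   all of them extreme points *)
Definition ccw_convex_position : Prop :=
  forall i j k : 'I_n, (i < j)%N -> (j < k)%N -> 0 < area (v i) (v j) (v k).

Definition polygon : pt -> Prop := conv_hull v.

Definition adjacent (i j : 'I_n) : bool :=
  (j == (i.+1 %% n)%N :> nat) || (i == (j.+1 %% n)%N :> nat).

Definition is_chord (c : 'I_n * 'I_n) : bool :=
  (c.1 < c.2)%N && ~~ adjacent c.1 c.2.

Definition chord_seg (c : 'I_n * 'I_n) : pt -> Prop := segment (v c.1) (v c.2).

Definition is_endpoint (m : 'I_n) (c : 'I_n * 'I_n) : bool := (m == c.1) || (m == c.2).

Definition non_crossing (c1 c2 : 'I_n * 'I_n) : Prop :=
  forall x, chord_seg c1 x -> chord_seg c2 x ->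
    exists m : 'I_n, [&& is_endpoint m c1 & is_endpoint m c2] /\ x = v m.

Definition chordal_decomposition (delta : {set 'I_n * 'I_n}) : Prop :=
  #|delta| = (n - 3)%N /\
  (forall c, c \in delta -> is_chord c) /\
  (forall c1 c2, c1 \in delta -> c2 \in delta -> c1 != c2 -> non_crossing c1 c2).

Definition dec_edge (delta : {set 'I_n * 'I_n}) (i j : 'I_n) : bool :=
  adjacent i j || ((i < j)%N && ((i, j) \in delta)) || ((j < i)%N && ((j, i) \in delta)).

(* a triangle (with vertices given by indices i < j < k, hence counterclockwise) *)
Definition tri := ('I_n * 'I_n * 'I_n)%type.

Definition in_T (delta : {set 'I_n * 'I_n}) (t : tri) : bool :=
  let: (i, j, k) := t in
  [&& (i < j)%N, (j < k)%N, dec_edge delta i j, dec_edge delta j k & dec_edge delta i k].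

Definition tri_set (t : tri) : pt -> Prop :=
  let: (i, j, k) := t in
  conv_hull (fun l : 'I_3 => [:: v i; v j; v k]`_l).

Definition areal (t : tri) (m : 'I_n) (x : pt) : R :=
  let: (i, j, k) := t in
  let D := area (v i) (v j) (v k) in
  if m == i then area (v k) x (v j) / D
  else if m == j then area (v i) x (v k) / D
  else if m == k then area (v j) x (v i) / D
  else 0.

Definition ind (P : pt -> Prop) (x : pt) : R := (`[< P x >])%:R.

(* F_k = F_{k-1} + 1_{t_k} <.|v>_{t_k} - 1_{t_k /\ (t_1 \/ ... \/ t_{k-1})} <.|v>_{t_k};
   [prev] is the list t_1 ... t_{k-1} already processed *)
Fixpoint chordal_aux (m : 'I_n) (prev s : seq tri) (a : pt) : R :=
  match s with
  | [::] => 0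
  | t :: s' =>
      chordal_aux m (rcons prev t) s' a
      + (ind (tri_set t) a * areal t m a
         - ind (fun y => tri_set t y /\ exists2 t', t' \in prev & tri_set t' y) a
           * areal t m a)
  end.

Definition chordal_coord (m : 'I_n) (enum : seq tri) (a : pt) : R :=
  chordal_aux m [::] enum a.

Definition enumerates (delta : {set 'I_n * 'I_n}) (m : 'I_n) (e : seq tri) : Prop :=
  uniq e /\ forall t, t \in e <-> (in_T delta t /\ tri_set t (v m)).

End Defs.

From HB Require Import structures.
From mathcomp Require Import all_boot all_order all_algebra.
From mathcomp Require Import boolp.
From mathcomp Require Import ring lra zify.
Set Implicit Arguments. Unset Strict Implicit. Unset Printing Implicit Defensive.
Import Order.TTheory GRing.Theory Num.Theory.
Local Open Scope ring_scope.

(* Every point [a] of the polygon lies in a triangle of the decomposition: [n - 3] chords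
   is the most a convex polygon can carry, so every saturated sub-polygon cut off by an
   edge of the decomposition splits at an apex into two saturated ones, and [a] can be
   chased down to a triangle. Edges of the decomposition do not cross, so two triangles
   containing [a] lie on opposite sides of the line through a side of one of them; then
   [a] lies on that side and both areal coordinate vectors are its barycentric coordinates
   on that segment, hence equal. The inclusion-exclusion defining the chordal coordinates
   therefore returns the areal coordinates of [a] in any triangle containing it, and these
   sum to [1] and reproduce [a]. *)

Section Area.
Variable R : realFieldType.
Implicit Types p q r x y : 'rV[R]_2.

Lemma det_mx22 (M : 'M[R]_2) : \det M = M 0 0 * M 1 1 - M 0 1 * M 1 0.
Proof.
rewrite (expand_det_row _ 0) !big_ord_recr big_ord0 /= add0r.
rewrite /cofactor !det_mx11 !mxE /= expr0 expr1.
have -> : lift 0 (0 : 'I_1) = 1 by apply/val_inj.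
have -> : lift ord_max (0 : 'I_1) = 0 by apply/val_inj.
have -> : lift (widen_ord (leqnSn 1) ord_max) (0 : 'I_1) = 1 by apply/val_inj.
have -> : widen_ord (leqnSn 1) (@ord_max 0) = 0 by apply/val_inj.
have -> : @ord_max 1 = 1 by apply/val_inj.
ring.
Qed.

Lemma areaE p q r : area p q r =
  2^-1 * ((q 0 0 - p 0 0) * (r 0 1 - p 0 1) - (q 0 1 - p 0 1) * (r 0 0 - p 0 0)).
Proof.
rewrite /area det_mx22.
have up j : col_mx (q - p) (r - p) 0 j = (q - p) 0 j.
  by rewrite -(col_mxEu (q - p) (r - p) 0 j); congr (col_mx _ _ _ _); apply/val_inj.
have dn j : col_mx (q - p) (r - p) 1 j = (r - p) 0 j.
  by rewrite -(col_mxEd (q - p) (r - p) 0 j); congr (col_mx _ _ _ _); apply/val_inj.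
rewrite !up !dn !mxE; ring.
Qed.

Lemma row2P x y : x 0 0 = y 0 0 -> x 0 1 = y 0 1 -> x = y.
Proof.
move=> e0 e1; apply/rowP => -[[|[|j]] lt_j2] //.
- by rewrite (_ : Ordinal lt_j2 = 0) //; apply/val_inj.
- by rewrite (_ : Ordinal lt_j2 = 1) //; apply/val_inj.
Qed.

Lemma area_cycle p q r : area p q r = area q r p.
Proof. by rewrite !areaE; ring. Qed.

Lemma area_swap p q r : area p r q = - area p q r.
Proof. by rewrite !areaE; ring. Qed.

Lemma area_rev p q r : area r q p = - area p q r.
Proof. by rewrite !areaE; ring. Qed.

Lemma area_ppq p q : area p p q = 0.
Proof. by rewrite areaE; ring. Qed.

Lemma area_pqq p q : area p q q = 0.
Proof. by rewrite areaE; ring. Qed.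

Lemma area_neq0 p q r : area p q r != 0 -> [/\ p != q, q != r & r != p].
Proof.
move=> A; split; apply: contraNneq A => ->.
- by rewrite area_ppq.
- by rewrite area_pqq.
- by rewrite area_cycle area_pqq.
Qed.

Lemma area_affine_mid (I : finType) (l : I -> R) (u : I -> 'rV[R]_2) p q :
  \sum_i l i = 1 -> area p (\sum_i l i *: u i) q = \sum_i l i * area p (u i) q.
Proof.
move=> sum_l.
pose A := 2^-1 * (q 0 1 - p 0 1); pose B := - 2^-1 * (q 0 0 - p 0 0).
pose C := 2^-1 * (- p 0 0 * (q 0 1 - p 0 1) + p 0 1 * (q 0 0 - p 0 0)).
have lin x : area p x q = A * x 0 0 + B * x 0 1 + C by rewrite areaE /A /B /C; ring.
rewrite lin !summxE.
rewrite [RHS](eq_bigr (fun i => A * (l i * u i 0 0) + B * (l i * u i 0 1) + C * l i));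
  last by move=> i _; rewrite lin; ring.
rewrite !big_split /= -!mulr_sumr sum_l mulr1.
by congr (A * _ + B * _ + _); apply: eq_bigr => i _; rewrite mxE.
Qed.

Lemma conv_hull_area_ge0 (m : nat) (u : 'I_m -> 'rV[R]_2) p q x :
  (forall i, 0 <= area p (u i) q) -> conv_hull u x -> 0 <= area p x q.
Proof.
move=> right_u [l [l_ge0 [sum_l ->]]]; rewrite area_affine_mid //.
by apply: sumr_ge0 => i _; rewrite mulr_ge0.
Qed.

Lemma sum_ord3 (V : nmodType) (F : 'I_3 -> V) : \sum_i F i = F 0 + F 1 + F ord_max.
Proof. by rewrite !big_ord_recr big_ord0 /= add0r; congr (F _ + F _ + _); apply/val_inj. Qed.

Lemma conv_hull3P p q r x :
  conv_hull (fun l : 'I_3 => [:: p; q; r]`_l) x <->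
  exists l0 l1 l2, [/\ 0 <= l0, 0 <= l1, 0 <= l2, l0 + l1 + l2 = 1 &
                      x = l0 *: p + l1 *: q + l2 *: r].
Proof.
split => [[l [l_ge0 [sum_l ->]]] | [l0 [l1 [l2 [l0_ge0 l1_ge0 l2_ge0 sum_l ->]]]]].
  exists (l 0), (l 1), (l ord_max); split => //; first by rewrite -sum_ord3.
  by rewrite sum_ord3.
exists (fun i : 'I_3 => [:: l0; l1; l2]`_i); split; last by rewrite !sum_ord3.
by move=> [[|[|[|i]]] ?].
Qed.

Lemma conv_hull3_areas p q r x : 0 < area p q r ->
  area p x q <= 0 -> area q x r <= 0 -> 0 <= area p x r ->
  conv_hull (fun l : 'I_3 => [:: p; q; r]`_l) x.
Proof.
move=> A_gt0 pxq qxr pxr; have A_neq0 : area p q r != 0 by rewrite gt_eqF.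
(* the areal coordinates of [x] in the triangle [p q r] *)
apply/conv_hull3P; exists (- area q x r / area p q r), (area p x r / area p q r),
  (- area p x q / area p q r).
split; try by apply: divr_ge0; rewrite ?oppr_ge0 // ltW.
- by move: A_neq0; rewrite !areaE => A_neq0; field; apply: contra A_neq0 => /eqP A0; lra.
- apply: row2P; rewrite !mxE; move: A_neq0; rewrite !areaE => A_neq0; field;
  by apply: contra A_neq0 => /eqP A0; lra.
Qed.

Lemma segments_cross p q r s :
  0 < area r s p -> area r s q < 0 -> area p q r < 0 -> 0 < area p q s ->
  exists x, segment p q x /\ segment r s x.
Proof.
have ratio01 (a b : R) : 0 < a -> b < 0 -> a - b != 0 /\ 0 <= a / (a - b) <= 1.
  move=> a_gt0 b_lt0; have d_gt0 : 0 < a - b by rewrite subr_gt0 (lt_trans b_lt0).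
  split; first by rewrite gt_eqF.
  by rewrite divr_ge0 ?(ltW a_gt0) ?(ltW d_gt0) //= ler_pdivrMr // mul1r lerDl oppr_ge0 ltW.
move=> /ratio01 t01 /t01 [_ t01'] {t01}.
rewrite -oppr_gt0 => /ratio01 u01; rewrite -oppr_lt0 => /u01 [du u01'] {u01}.
(* on each segment, the point where the area against the other segment vanishes *)
exists ((1 - area r s p / (area r s p - area r s q)) *: p
        + area r s p / (area r s p - area r s q) *: q).
split; first by exists (area r s p / (area r s p - area r s q)).
exists (- area p q r / (- area p q r - - area p q s)); split => //.
move: du; rewrite !areaE => du.
by apply: row2P; rewrite !mxE; field; apply: contra du => /eqP d0; apply/eqP; lra.
Qed.

End Area.

Section Barycentric.
Variables (R : realFieldType) (n : nat) (v : 'I_n -> 'rV[R]_2).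
Implicit Types (L M : 'I_n -> R) (a : 'rV[R]_2) (p q m : 'I_n).

Definition bary_coords L a : Prop :=
  [/\ forall m, 0 <= L m, \sum_m L m = 1 & \sum_m L m *: v m = a].

(* [v p], [v m], [v q] turn counterclockwise: [v m] is right of the line [v p] -> [v q]. *)
Definition right_side p q m : Prop := 0 < area (v p) (v m) (v q) \/ m = p \/ m = q.

Lemma right_side_area_ge0 p q m : right_side p q m -> 0 <= area (v p) (v m) (v q).
Proof. by case=> [/ltW // | [-> | ->]]; rewrite ?area_ppq ?area_pqq. Qed.

Lemma bary_area L a p q : bary_coords L a ->
  area (v p) a (v q) = \sum_m L m * area (v p) (v m) (v q).
Proof. by case=> _ sum_L <-; rewrite area_affine_mid. Qed.

Section RightSide.
Variables (L : 'I_n -> R) (a : 'rV[R]_2) (p q : 'I_n).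
Hypotheses (La : bary_coords L a) (L_right : forall m, L m != 0 -> right_side p q m).

Lemma bary_right_term_ge0 m : 0 <= L m * area (v p) (v m) (v q).
Proof.
have [L_ge0 _ _] := La; have [-> | /L_right/right_side_area_ge0] := eqVneq (L m) 0.
  by rewrite mul0r.
exact: mulr_ge0.
Qed.

Lemma bary_right_area_ge0 : 0 <= area (v p) a (v q).
Proof. by rewrite (bary_area _ _ La); apply: sumr_ge0 => m _; apply: bary_right_term_ge0. Qed.

Lemma bary_right_support : area (v p) a (v q) <= 0 ->
  forall m, m != p -> m != q -> L m = 0.
Proof.
move=> a_le0 m mp mq.
have : \sum_m L m * area (v p) (v m) (v q) = 0.
  by apply/eqP; rewrite eq_le -(bary_area _ _ La) a_le0 bary_right_area_ge0.
move/psumr_eq0P => /(_ (fun m _ => bary_right_term_ge0 m)) /(_ m isT) /eqP.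
rewrite mulf_eq0 => /orP [/eqP // | /eqP area0].
apply/eqP; apply: contraT => /L_right [| [/eqP | /eqP]]; last 2 first.
- by rewrite (negbTE mp).
- by rewrite (negbTE mq).
by rewrite area0 ltxx.
Qed.

End RightSide.

Lemma sum_supp2 (V : nmodType) (F : 'I_n -> V) p q : p != q ->
  (forall m, m != p -> m != q -> F m = 0) -> \sum_m F m = F p + F q.
Proof.
move=> pq F0; rewrite (bigD1 p) //= (bigD1 q) /=; last by rewrite eq_sym.
by rewrite big1 ?addr0 // => m /andP [mq mp]; apply: F0.
Qed.

Lemma bary_edge_unique L M a p q : v p != v q ->
  bary_coords L a -> bary_coords M a ->
  (forall m, m != p -> m != q -> L m = 0) -> (forall m, m != p -> m != q -> M m = 0) ->
  L =1 M.
Proof.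
move=> vpq [_ sum_L La] [_ sum_M Ma] L0 M0.
have pq : p != q by apply: contraNneq vpq => ->.
rewrite (sum_supp2 pq L0) in sum_L; rewrite (sum_supp2 pq M0) in sum_M.
rewrite (sum_supp2 (F := fun m => L m *: v m) pq) in La;
  last by move=> m mp mq; rewrite L0 ?scale0r.
rewrite (sum_supp2 (F := fun m => M m *: v m) pq) in Ma;
  last by move=> m mp mq; rewrite M0 ?scale0r.
have LMp : L p = M p.
  have Lq : L q = 1 - L p by rewrite -sum_L addrAC subrr add0r.
  have Mq : M q = 1 - M p by rewrite -sum_M addrAC subrr add0r.
  rewrite Lq Mq in La Ma.
  have : (L p - M p) *: (v p - v q) = 0.
    apply/rowP => k; move/rowP: La => /(_ k); move/rowP: Ma => /(_ k); rewrite !mxE.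
    by rewrite mulrBl !mulrBr; lra.
  by move/eqP; rewrite scaler_eq0 !subr_eq0 (negbTE vpq) orbF => /eqP.
move=> m; have [-> // | mp] := eqVneq m p; have [-> | mq] := eqVneq m q; first lra.
by rewrite L0 // M0.
Qed.

(* [a] must lie on the line through [v p] and [v q], which forces both coordinate
   vectors to be supported on [p] and [q]. *)
Lemma bary_unique_across L M a p q : v p != v q ->
  bary_coords L a -> bary_coords M a ->
  (forall m, L m != 0 -> right_side q p m) -> (forall m, M m != 0 -> right_side p q m) ->
  L =1 M.
Proof.
move=> vpq La Ma L_right M_right.
have qap := area_rev (v p) a (v q).
have L_ge0 := bary_right_area_ge0 La L_right.
have M_ge0 := bary_right_area_ge0 Ma M_right.
apply: (bary_edge_unique vpq La Ma) => m mp mq.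
- by apply: (bary_right_support La L_right) => //; rewrite qap oppr_le0.
- by apply: (bary_right_support Ma M_right) => //; rewrite -oppr_ge0 -qap.
Qed.

Definition tri_vertices (t : tri n) : seq 'I_n := let: (i, j, k) := t in [:: i; j; k].

Lemma areal_eq0 t m a : m \notin tri_vertices t -> areal v t m a = 0.
Proof.
by case: t => [[i j] k]; rewrite !inE /areal => /norP [/negbTE-> /norP [/negbTE-> /negbTE->]].
Qed.

Lemma tri_set_vertex t m : m \in tri_vertices t -> tri_set v t (v m).
Proof.
case: t => [[i j] k]; rewrite !inE => /or3P [] /eqP ->; apply/conv_hull3P.
- by exists 1, 0, 0; split; rewrite ?ler01 ?lexx ?scale0r ?scale1r ?addr0 ?add0r.
- by exists 0, 1, 0; split; rewrite ?ler01 ?lexx ?scale0r ?scale1r ?addr0 ?add0r.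
- by exists 0, 0, 1; split; rewrite ?ler01 ?lexx ?scale0r ?scale1r ?addr0 ?add0r.
Qed.

Lemma areal_bary (i j k : 'I_n) a : area (v i) (v j) (v k) != 0 ->
  tri_set v (i, j, k) a -> bary_coords (fun m => areal v (i, j, k) m a) a.
Proof.
move=> D /conv_hull3P [l0 [l1 [l2 [l0_ge0 l1_ge0 l2_ge0 sum_l ->]]]].
have [vij vjk vki] := area_neq0 D.
have ij : i != j by apply: contraNneq vij => ->.
have jk : j != k by apply: contraNneq vjk => ->.
have ki : k != i by apply: contraNneq vki => ->.
have l2E : l2 = 1 - l0 - l1 by rewrite -sum_l; ring.
set x := _ + _ + _.
have areal_x m : areal v (i, j, k) m x =
    (if m == i then l0 else 0) + (if m == j then l1 else 0)
    + (if m == k then l2 else 0).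
  rewrite /areal; have [-> | mi] := eqVneq m i.
    rewrite (negbTE ij) eq_sym (negbTE ki) !addr0; apply: (canLR (mulfK D)).
    by rewrite /x l2E !areaE !mxE; ring.
  have [-> | mj] := eqVneq m j.
    rewrite (negbTE jk) add0r addr0; apply: (canLR (mulfK D)).
    by rewrite /x l2E !areaE !mxE; ring.
  have [_ | mk] := eqVneq m k; last by rewrite !addr0.
  rewrite !add0r; apply: (canLR (mulfK D)).
  by rewrite /x l2E !areaE !mxE; ring.
have sum_pick (V : nmodType) (F : 'I_n -> V) c : \sum_m (if m == c then F m else 0) = F c.
  by rewrite -big_mkcond big_pred1_eq.
split.
- by move=> m; rewrite areal_x; do !apply: addr_ge0; case: ifP.
- by under eq_bigr do rewrite areal_x; rewrite !big_split /= !sum_pick.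
- under eq_bigr do rewrite areal_x !scalerDl !(fun_if (fun c => c *: v _)) !scale0r.
  by rewrite !big_split /= !sum_pick.
Qed.

Lemma tri_right_side (i j k m : 'I_n) : 0 < area (v i) (v j) (v k) ->
  m \in [:: i; j; k] -> [/\ right_side j i m, right_side k j m & right_side i k m].
Proof.
move=> D; have D' := D; rewrite area_cycle in D'; have D'' := D'; rewrite area_cycle in D''.
by rewrite !inE => /or3P [] /eqP ->; split; rewrite /right_side ?eqxx; auto.
Qed.

End Barycentric.

Section Telescoping.
Variables (R : realFieldType) (n : nat) (v : 'I_n -> 'rV[R]_2).

Definition covered (s : seq (tri n)) (a : 'rV[R]_2) : Prop :=
  exists2 t, t \in s & tri_set v t a.

Lemma covered_nil a : ~ covered [::] a.
Proof. by case. Qed.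

Lemma covered_cons t s a : covered (t :: s) a <-> tri_set v t a \/ covered s a.
Proof.
split => [[t' /predU1P [-> | t's] t'a] | [ta | [t' t's t'a]]].
- by left.
- by right; exists t'.
- by exists t; rewrite ?mem_head.
- by exists t'; rewrite // inE t's orbT.
Qed.

Lemma covered_rcons s t a : covered (rcons s t) a <-> covered s a \/ tri_set v t a.
Proof.
split => [[t'] | [[t' t's t'a] | ta]].
- by rewrite mem_rcons => /predU1P [-> | t's] t'a; [right | left; exists t'].
- by exists t'; rewrite // mem_rcons inE t's orbT.
- by exists t; rewrite // mem_rcons mem_head.
Qed.

(* The correction term removes the contribution of every triangle containing [a] except
   the first one met in the enumeration. *)
Lemma chordal_aux_const (m : 'I_n) (beta : R) a s prev :
  (forall t, t \in s -> tri_set v t a -> areal v t m a = beta) ->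
  chordal_aux v m prev s a =
    if `[< covered prev a >] then 0 else if `[< covered s a >] then beta else 0.
Proof.
elim: s prev => [|t s IH] prev beta_s /=.
  by rewrite (asboolF (@covered_nil a)); case: ifP.
rewrite IH => [|t' t's]; last by apply: beta_s; rewrite inE t's orbT.
rewrite /ind /= asbool_and (asbool_equiv_eq (covered_rcons _ _ _)).
rewrite (asbool_equiv_eq (covered_cons _ _ _)) !asbool_or.
case: (asboolP (tri_set v t a)) => ta /=; last by rewrite orbF !mul0r subrr addr0.
rewrite (beta_s t) ?mem_head // orbT mul1r.
by case: `[< covered prev a >]; rewrite /= ?mul1r ?mul0r ?subrr ?subr0 ?add0r.
Qed.

End Telescoping.

Section Polygon.
Variables (R : realFieldType) (n : nat) (v : 'I_n -> 'rV[R]_2).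
Hypothesis v_ccw : ccw_convex_position v.

Lemma right_side_between (x y s : 'I_n) : (x <= s <= y)%N -> right_side v x y s.
Proof.
move=> /andP [xs sy]; rewrite /right_side.
have [-> | sx] := eqVneq s x; first by auto.
have [-> | s_y] := eqVneq s y; first by auto.
left; apply: v_ccw.
- by rewrite ltn_neqAle xs andbT eq_sym.
- by rewrite ltn_neqAle sy andbT.
Qed.

Lemma right_side_outside (i k s : 'I_n) : (i < k)%N -> (s <= i)%N || (k <= s)%N ->
  right_side v k i s.
Proof.
move=> ik si_ks; rewrite /right_side.
have [-> | sk] := eqVneq s k; first by auto.
have [-> | s_i] := eqVneq s i; first by auto.
left; case/orP: si_ks => [si | ks].
- rewrite area_cycle; apply: v_ccw => //.
  by rewrite ltn_neqAle si andbT.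
- rewrite -area_cycle; apply: v_ccw => //.
  by rewrite ltn_neqAle ks andbT eq_sym.
Qed.

Lemma polygon_edge_area_le0 (p r : 'I_n) x : r = p.+1 :> nat -> polygon v x ->
  area (v p) x (v r) <= 0.
Proof.
move=> rp px; rewrite -oppr_ge0 -area_rev.
apply: conv_hull_area_ge0 px => s; apply/right_side_area_ge0/right_side_outside; lia.
Qed.

Lemma chords_cross (a b c d : 'I_n) : (a < c < b)%N -> (b < d)%N ->
  exists x, chord_seg v (a, b) x /\ chord_seg v (c, d) x.
Proof.
move=> /andP [ac cb] bd; apply: segments_cross.
- by rewrite -area_cycle; apply: v_ccw; rewrite // (ltn_trans cb).
- by rewrite -oppr_gt0 -area_swap; apply: v_ccw.
- by rewrite -oppr_gt0 -area_swap; apply: v_ccw.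
- by apply: v_ccw; rewrite // (ltn_trans ac).
Qed.

Lemma adjacent_lt (a b : 'I_n) : (a < b)%N ->
  adjacent a b = (b == a.+1 :> nat) || (a == 0 :> nat) && (b == n.-1 :> nat).
Proof.
move=> ab; have bn := ltn_ord b.
rewrite /adjacent (modn_small (_ : a.+1 < n)%N); last lia.
have [bn1 | bn1] : b.+1 = n \/ (b.+1 < n)%N by lia.
- by rewrite bn1 modnn; lia.
- by rewrite modn_small //; lia.
Qed.

Variable delta : {set 'I_n * 'I_n}.
Hypothesis delta_dec : chordal_decomposition v delta.

Lemma dec_edgeC (a b : 'I_n) : dec_edge delta a b = dec_edge delta b a.
Proof.
rewrite /dec_edge /adjacent.
by rewrite (orbC (b == _ :> nat)) -orbA (orbC ((a < b)%N && _)) orbA.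
Qed.

Lemma dec_edge_lt (a b : 'I_n) : (a < b)%N -> dec_edge delta a b =
  [|| b == a.+1 :> nat, (a == 0 :> nat) && (b == n.-1 :> nat) | (a, b) \in delta].
Proof.
by move=> ab; rewrite /dec_edge adjacent_lt // ab ltnNge (ltnW ab) /= orbF -orbA.
Qed.

Lemma chord_span (c : 'I_n * 'I_n) : c \in delta ->
  (c.1.+1 < c.2)%N /\ ~~ ((c.1 == 0 :> nat) && (c.2 == n.-1 :> nat)).
Proof.
have [_ [is_chord_delta _]] := delta_dec.
move=> /is_chord_delta /andP [c12]; rewrite adjacent_lt // negb_or => /andP [].
by move=> /eqP ? ->; split => //; lia.
Qed.

Lemma dec_edges_noncrossing (a b c d : 'I_n) :
  dec_edge delta a b -> dec_edge delta c d -> (a < c < b)%N -> (b < d)%N -> False.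
Proof.
move=> eab ecd acb bd; have dn := ltn_ord d.
move: eab ecd; rewrite !dec_edge_lt; try lia.
move=> /or3P [| | ab_in]; try lia; move=> /or3P [| | cd_in]; try lia.
have [x [xab xcd]] := chords_cross acb bd.
have [_ [_ noncrossing]] := delta_dec.
have ab_cd : (a, b) != (c, d) by apply/eqP => -[ac _]; move: acb; rewrite ac ltnn.
have [m [/andP [m_ab m_cd] _]] := noncrossing _ _ ab_in cd_in ab_cd x xab xcd.
move: m_ab m_cd; rewrite /is_endpoint /=.
by move=> /orP [] /eqP -> /orP [] /eqP /(congr1 val) /=; lia.
Qed.

Lemma dec_edge_arc_in (x y s s' : 'I_n) : dec_edge delta x y -> dec_edge delta s s' ->
  (x < s < y)%N -> (x <= s' <= y)%N.
Proof.
move=> exy ess' /andP [xs sy].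
case: (ltnP s' x) => [s'x | _] /=.
  have es's : dec_edge delta s' s by rewrite dec_edgeC.
  by exfalso; apply: (dec_edges_noncrossing es's exy) => //; rewrite s'x.
rewrite leqNgt; apply/negP => ys'.
by apply: (dec_edges_noncrossing exy ess') => //; rewrite xs.
Qed.

Lemma dec_edge_arc_out (i k s s' : 'I_n) : dec_edge delta i k -> dec_edge delta s s' ->
  (s < i)%N || (k < s)%N -> (s' <= i)%N || (k <= s')%N.
Proof.
move=> eik ess' si_ks.
case: (leqP s' i) => // is'; case: (leqP k s') => // s'k; exfalso.
case/orP: si_ks => [si | ks].
- by apply: (dec_edges_noncrossing ess' eik) => //; rewrite si.
- have es's : dec_edge delta s' s by rewrite dec_edgeC.
  by apply: (dec_edges_noncrossing eik es's) => //; rewrite is'.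
Qed.

Lemma in_T_edge t : in_T delta t ->
  {in tri_vertices t &, forall s s', s != s' -> dec_edge delta s s'}.
Proof.
case: t => [[i j] k] /and5P [_ _ eij ejk eik] s s'; rewrite !inE.
by case/or3P => /eqP -> /or3P [] /eqP ->; rewrite ?eqxx // => _; rewrite dec_edgeC.
Qed.

Lemma tri_arc_in t (x y : 'I_n) : in_T delta t -> dec_edge delta x y ->
  has (fun s : 'I_n => x < s < y)%N (tri_vertices t) ->
  all (fun s : 'I_n => x <= s <= y)%N (tri_vertices t).
Proof.
move=> T exy /hasP [s ts /andP [xs sy]]; apply/allP => s' ts'.
have [<- | ss'] := eqVneq s s'; first by rewrite (ltnW xs) (ltnW sy).
by apply: (dec_edge_arc_in exy (in_T_edge T ts ts' ss')); rewrite xs.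
Qed.

Lemma tri_arc_out t (i k : 'I_n) : in_T delta t -> dec_edge delta i k ->
  has (fun s : 'I_n => (s < i) || (k < s))%N (tri_vertices t) ->
  all (fun s : 'I_n => (s <= i) || (k <= s))%N (tri_vertices t).
Proof.
move=> T eik /hasP [s ts si_ks]; apply/allP => s' ts'.
have [<- | ss'] := eqVneq s s'; first by case/orP: si_ks => /ltnW ->; rewrite ?orbT.
exact: (dec_edge_arc_out eik (in_T_edge T ts ts' ss')).
Qed.

Lemma in_T_areal_bary t a : in_T delta t -> tri_set v t a ->
  bary_coords v (areal v t ^~ a) a.
Proof. by case: t => [[i j] k] /and5P [ij jk _ _ _]; apply/areal_bary/lt0r_neq0/v_ccw. Qed.

(* Geometrically: [t] lies beyond one of the sides of the triangle [(i, j, k)]. *)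
Lemma in_T_separated (i j k : 'I_n) t : in_T delta (i, j, k) -> in_T delta t ->
  (i, j, k) != t ->
  [\/ all (fun s : 'I_n => i <= s <= j)%N (tri_vertices t),
      all (fun s : 'I_n => j <= s <= k)%N (tri_vertices t) |
      all (fun s : 'I_n => (s <= i) || (k <= s))%N (tri_vertices t)].
Proof.
move=> T T' tt'; have /and5P [ij jk eij ejk eik] := T.
have [h | out_ij] := boolP (has (fun s : 'I_n => i < s < j)%N (tri_vertices t)).
  by apply: Or31; apply: tri_arc_in h.
have [h | out_jk] := boolP (has (fun s : 'I_n => j < s < k)%N (tri_vertices t)).
  by apply: Or32; apply: tri_arc_in h.
have [h | out_ki] := boolP (has (fun s : 'I_n => (s < i) || (k < s))%N (tri_vertices t)).
  by apply: Or33; apply: tri_arc_out h.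
exfalso; move: tt' out_ij out_jk out_ki; case: t T' => [[i' j'] k'] /and5P [i'j' j'k' _ _ _].
rewrite /= !xpair_eqE -!val_eqE /=; lia.
Qed.

Lemma areal_consistent t t' a : in_T delta t -> in_T delta t' ->
  tri_set v t a -> tri_set v t' a -> areal v t ^~ a =1 areal v t' ^~ a.
Proof.
have [-> // | tt'] := eqVneq t t'.
case: t tt' => [[i j] k] tt' T T' ta t'a; have /and5P [ij jk _ _ _] := T.
case: t' tt' T' t'a => [[i' j'] k'] tt' T' t'a.
have D := v_ccw ij jk; have [vij vjk vki] := area_neq0 (lt0r_neq0 D).
have La := in_T_areal_bary T ta; have Ma := in_T_areal_bary T' t'a.
have L_supp m : areal v (i, j, k) m a != 0 -> m \in [:: i; j; k].
  by apply: contraR => m_out; apply/eqP/areal_eq0.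
have M_supp m : areal v (i', j', k') m a != 0 -> m \in [:: i'; j'; k'].
  by apply: contraR => m_out; apply/eqP/areal_eq0.
case: (in_T_separated T T' tt') => /allP t'_arc.
- apply: (bary_unique_across vij La Ma) => m.
    by move=> /L_supp /(tri_right_side D) [right _ _].
  by move=> /M_supp /t'_arc /right_side_between.
- apply: (bary_unique_across vjk La Ma) => m.
    by move=> /L_supp /(tri_right_side D) [_ right _].
  by move=> /M_supp /t'_arc /right_side_between.
- apply: (bary_unique_across vki La Ma) => m.
    by move=> /L_supp /(tri_right_side D) [_ _ right].
  by move=> /M_supp /t'_arc /(right_side_outside (ltn_trans ij jk)).
Qed.

Definition chords_within (p q : 'I_n) : {set 'I_n * 'I_n} :=
  [set c in delta | (p <= c.1)%N && (c.2 <= q)%N].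

Definition chords_inside (p q : 'I_n) : {set 'I_n * 'I_n} := chords_within p q :\ (p, q).

(* The sub-polygon [v p, ..., v q] carries as many chords as a triangulation of it.
   Because of the truncated subtraction, every boundary edge [q = p.+1] is saturated. *)
Definition saturated (p q : 'I_n) : Prop := #|chords_inside p q| = (q - p - 2)%N.

Lemma card_chords_within (p q : 'I_n) :
  #|chords_within p q| = (((p, q) \in delta) + #|chords_inside p q|)%N.
Proof. by rewrite /chords_inside (cardsD1 (p, q)) !inE /= !leqnn !andbT. Qed.

Lemma chords_within_edge (p q : 'I_n) : (q <= p.+1)%N -> chords_within p q = set0.
Proof.
move=> qp1; apply/setP => -[c1 c2]; rewrite !inE /=.
by apply/negP => /andP [/chord_span [/= span _] /andP [pc cq]]; lia.
Qed.

Lemma farthest_edge_from (p q : 'I_n) : (p.+1 < q)%N -> exists r : 'I_n,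
  [/\ (p < r < q)%N, dec_edge delta p r &
      forall c, (p, c) \in delta -> (c < q)%N -> (c <= r)%N].
Proof.
move=> p1q; have qn := ltn_ord q.
pose S := [set c : 'I_n | ((p, c) \in delta) && (c < q)%N].
case: (set_0Vmem S) => [S0 | [c0 c0S]].
  have p1n : (p.+1 < n)%N by lia.
  exists (Ordinal p1n); split; [rewrite /=; lia | by rewrite dec_edge_lt //= eqxx |].
  by move=> c pc cq; have := in_set0 c; rewrite -S0 inE pc cq.
have [r rS r_max] := @arg_maxnP _ c0 (mem S) val c0S.
move: (rS); rewrite !inE => /andP [pr_in rq].
have [/= p1r _] := chord_span pr_in.
exists r; split; [lia | by rewrite dec_edge_lt ?pr_in ?orbT //; lia |].
by move=> c pc cq; apply: r_max; rewrite !inE pc cq.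
Qed.

Lemma card_chords_inside_split (p q : 'I_n) : (p.+1 < q)%N -> exists r : 'I_n,
  (p < r < q)%N /\ (#|chords_inside p q| <= #|chords_within p r| + #|chords_within r q|)%N.
Proof.
move=> p1q; have [r [/andP [pr rq] epr r_max]] := farthest_edge_from p1q.
exists r; split; first by rewrite pr.
apply: leq_trans (leq_card_setU _ _).1; apply/subset_leq_card/subsetP => -[c1 c2].
rewrite !inE /= => /andP [c_pq /andP [c_in /andP [pc1 c2q]]].
case: (leqP c2 r) => [_ | rc2]; first by rewrite c_in pc1.
case: (leqP r c1) => [_ | c1r]; first by rewrite c_in c2q orbT.
exfalso; have [c1p | pc1'] := eqVneq c1 p.
  rewrite c1p in c_in c_pq.
  have c2q' : (c2 < q)%N.
    by rewrite ltn_neqAle c2q andbT; apply: contraNneq c_pq => /val_inj ->.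
  by have := r_max c2 c_in c2q'; lia.
have [c12 _] := chord_span c_in.
have ec : dec_edge delta c1 c2 by rewrite dec_edge_lt ?c_in ?orbT //=; lia.
apply: (dec_edges_noncrossing epr ec) => //.
by rewrite c1r andbT ltn_neqAle eq_sym pc1' pc1.
Qed.

Lemma card_chords_within_bound (p q : 'I_n) : (p < q)%N ->
  (#|chords_inside p q| <= q - p - 2)%N -> (#|chords_within p q| <= q - p - 1)%N.
Proof.
move=> pq; rewrite card_chords_within.
by case: (boolP ((p, q) \in delta)) => [/chord_span [/= span _] | _] /=; lia.
Qed.

Lemma card_chords_inside_le (p q : 'I_n) : (p < q)%N ->
  (#|chords_inside p q| <= q - p - 2)%N.
Proof.
have [d] := ubnP (q - p); elim: d p q => // d IH p q qp_lt pq.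
case: (leqP q p.+1) => [qp1 | p1q].
  by rewrite (leq_trans (subset_leq_card (subsetDl _ _))) // chords_within_edge ?cards0.
have [r [/andP [pr rq] split_pq]] := card_chords_inside_split p1q.
have := card_chords_within_bound pr (IH p r _ pr).
have := card_chords_within_bound rq (IH r q _ rq).
lia.
Qed.

Lemma card_chords_within_le (p q : 'I_n) : (p < q)%N ->
  (#|chords_within p q| <= q - p - 1)%N.
Proof. by move=> pq; apply/card_chords_within_bound/card_chords_inside_le. Qed.

Lemma saturated_of_within (p q : 'I_n) : (p < q)%N ->
  #|chords_within p q| = (q - p - 1)%N -> dec_edge delta p q /\ saturated p q.
Proof.
move=> pq; have := card_chords_inside_le pq; rewrite card_chords_within /saturated.
case: (boolP ((p, q) \in delta)) => pq_in /= le within_eq.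
  have [/= span _] := chord_span pq_in.
  by split; [rewrite dec_edge_lt ?pq_in ?orbT | lia].
have qp1 : q = p.+1 :> nat by lia.
by split; [rewrite dec_edge_lt // qp1 eqxx | lia].
Qed.

Lemma saturated_apex (p q : 'I_n) : (p.+1 < q)%N -> saturated p q -> exists r : 'I_n,
  [/\ (p < r < q)%N, dec_edge delta p r, dec_edge delta r q, saturated p r & saturated r q].
Proof.
move=> p1q sat; have [r [/andP [pr rq] split_pq]] := card_chords_inside_split p1q.
have := card_chords_within_le pr; have := card_chords_within_le rq.
rewrite /saturated in sat; rewrite sat in split_pq => le_rq le_pr.
have [epr sat_pr] : dec_edge delta p r /\ saturated p r.
  by apply: saturated_of_within pr _; lia.
have [erq sat_rq] : dec_edge delta r q /\ saturated r q.
  by apply: saturated_of_within rq _; lia.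
by exists r; rewrite pr rq.
Qed.

Lemma saturated_boundary (n0 : (0 < n)%N) (n1 : (n.-1 < n)%N) : (3 <= n)%N ->
  saturated (Ordinal n0) (Ordinal n1).
Proof.
move=> n3; set p := Ordinal n0; set q := Ordinal n1.
have within_all : chords_within p q = delta.
  by apply/setP => c; rewrite inE andb_idr // => _; have := ltn_ord c.2; rewrite /=; lia.
have pq_out : (p, q) \notin delta by apply/negP => /chord_span [_]; rewrite /= !eqxx.
have := card_chords_within p q; rewrite within_all (negbTE pq_out) add0n /saturated => <-.
by have [-> _] := delta_dec; rewrite /=; lia.
Qed.

Lemma cover_right_of_edge (p q : 'I_n) x : (p.+1 < q)%N -> dec_edge delta p q ->
  saturated p q -> polygon v x -> 0 <= area (v p) x (v q) ->
  exists2 t, in_T delta t & tri_set v t x.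
Proof.
have [d] := ubnP (q - p); elim: d p q => // d IH p q qp_lt p1q epq sat px pxq.
have [r [/andP [pr rq] epr erq sat_pr sat_rq]] := saturated_apex p1q sat.
have [prx | prx] := ltrP 0 (area (v p) x (v r)).
  have p1r : (p.+1 < r)%N.
    rewrite ltnNge; apply/negP => rp1.
    by have := polygon_edge_area_le0 (_ : r = p.+1 :> nat) px; rewrite leNgt prx; lia.
  by apply: (IH p r) => //; [lia | apply: ltW].
have [rxq | rxq] := ltrP 0 (area (v r) x (v q)).
  have r1q : (r.+1 < q)%N.
    rewrite ltnNge; apply/negP => qr1.
    by have := polygon_edge_area_le0 (_ : q = r.+1 :> nat) px; rewrite leNgt rxq; lia.
  by apply: (IH r q) => //; [lia | apply: ltW].
exists (p, r, q); first by rewrite /in_T pr rq epr erq epq.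
by apply: conv_hull3_areas => //; apply: v_ccw.
Qed.

Lemma polygon_cover x : (3 <= n)%N -> polygon v x -> exists2 t, in_T delta t & tri_set v t x.
Proof.
move=> n3 px.
have n0 : (0 < n)%N by lia.
have n1 : (n.-1 < n)%N by lia.
apply: (cover_right_of_edge (p := Ordinal n0) (q := Ordinal n1)) => //=.
- lia.
- by rewrite dec_edge_lt /= ?eqxx ?orbT //; lia.
- exact: saturated_boundary.
- apply: conv_hull_area_ge0 px => s; apply/right_side_area_ge0/right_side_between => /=.
  by have := ltn_ord s; lia.
Qed.

Lemma chordal_coord_areal m e t a : enumerates v delta m e ->
  in_T delta t -> tri_set v t a -> chordal_coord v m e a = areal v t m a.
Proof.
move=> [_ eP] T ta; rewrite /chordal_coord (chordal_aux_const (beta := areal v t m a)).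
  rewrite (asboolF (@covered_nil _ _ v a)).
  case: (asboolP (covered v e a)) => // not_covered.
  have [m_t | m_t] := boolP (m \in tri_vertices t); last by rewrite areal_eq0.
  by case: not_covered; exists t => //; apply/eP; split => //; apply: tri_set_vertex.
by move=> t' /eP [T' _] t'a; apply: areal_consistent.
Qed.

End Polygon.

Theorem theorem7p14 (R : realFieldType) (n : nat) (v : 'I_n -> 'rV[R]_2)
  (delta : {set 'I_n * 'I_n}) (e : 'I_n -> seq (tri n)) :
  (3 <= n)%N ->
  ccw_convex_position v ->
  chordal_decomposition v delta ->
  (forall m, enumerates v delta m (e m)) ->
  forall a : 'rV[R]_2, polygon v a ->
    \sum_(m < n) chordal_coord v m (e m) a = 1 /\
    a = \sum_(m < n) chordal_coord v m (e m) a *: v m.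
Proof.
move=> n3 v_ccw delta_dec e_enum a a_in.
have [t T ta] := polygon_cover v_ccw delta_dec n3 a_in.
have coordE m : chordal_coord v m (e m) a = areal v t m a.
  exact: (chordal_coord_areal v_ccw delta_dec (e_enum m) T ta).
have [_ sum1 sum_a] := in_T_areal_bary v_ccw T ta.
by split; under eq_bigr do rewrite coordE.
Qed.
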